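(* Let $\mathcal L:\mathcal Y\times\mathbb R^d\to\mathbb R$ be continuously differentiable and $\mu$-strongly convex. Let $Q$ be a probability distribution over functions $g:\mathcal X\to\mathbb R^d$, fix $k\ge1$, and let $G=\{g_1,\dots,g_k\}\sim Q^k$ and $G'=\{g'_1,\dots,g'_k\}\sim Q^k$ be independent. Define \[ f_1=\arg\min_{f\in V(G)}\mathbb E[\mathcal L(y,f(x))],\qquad f_2=\arg\min_{f\in V(G')}\mathbb E[\mathcal L(y,f(x))]. \] Then \[ \mathbb E_{f_1,f_2}[D(f_1,f_2)]\le\frac8\mu\big(\bar R_k-\bar R_{2k}\big). \]
   Context: $P$ is a distribution on $\mathcal X\times\mathcal Y$; expectations are over $(x,y)\sim P$ unless indicated. $\mathcal L$ is $\mu$-strongly convex ($\mu>0$) if for all $y\in\mathcal Y$ and $P_1,P_2\in\mathbb R^d$: $\mathcal L(y,P_1)\ge\mathcal L(y,P_2)+\langle\nabla_p\mathcal L(y,P_2),P_1-P_2\rangle+\frac\mu2\|P_1-P_2\|_2^2$. For $f:\mathcal X\to\mathbb R^d$, $R(f)=\mathbb E[\mathcal L(y,f(x))]$, and $D(f_1,f_2)=\mathbb E[\|f_1(x)-f_2(x)\|_2^2]$. For a finite multiset $G$ of functions $\mathcal X\to\mathbb R^d$, $V(G)$ is their linear span (real coefficients) and $R(G)=\min_{f\in V(G)}R(f)$ (minimizers assumed to exist). $\bar R_t=\mathbb E[R(\{g_1,\dots,g_t\})]$ with $g_1,\dots,g_t$ i.i.d. from $Q$. The outer expectation in the conclusion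 is over $G,G'$. *)

From HB Require Import structures.
From mathcomp Require Import all_boot all_order all_algebra.
From mathcomp Require Import all_classical all_reals all_analysis.
From mathcomp Require Import measurable_realfun.
Set Implicit Arguments. Unset Strict Implicit. Unset Printing Implicit Defensive.
Import Order.TTheory GRing.Theory Num.Theory.
Import numFieldNormedType.Exports.
Local Open Scope classical_set_scope.
Local Open Scope ring_scope.

Section Defs.
Context {R : realType}.

Definition sqnorm (d : nat) (v : 'rV[R]_d) : R := \sum_(i < d) (v 0 i) ^+ 2.

(* mu-strong convexity of L in its second argument, with the gradient pairing
   <grad_p L(y,P2), P1 - P2> written as the differential 'd (L y) P2 (P1 - P2) *)
Definition strongly_convex (Y : Type) (d : nat) (mu : R) (L : Y -> 'rV[R]_d -> R) :=
  forall (y : Y) (P1 P2 : 'rV[R]_d),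
    L y P2 + 'd (L y) P2 (P1 - P2) + mu / 2 * sqnorm (P1 - P2) <= L y P1.

Definition Vspan (X : Type) (d t : nat) (G : 'I_t -> X -> 'rV[R]_d) : set (X -> 'rV[R]_d) :=
  [set f | exists c : 'I_t -> R, f = (fun x => \sum_(i < t) c i *: G i x)].

Section Risk.
Context {dX dY : measure_display} {X : measurableType dX} {Y : measurableType dY}.
Variable P : probability (X * Y)%type R.
Context {d : nat}.
Variable L : Y -> 'rV[R]_d -> R.

Definition Risk (f : X -> 'rV[R]_d) : \bar R :=
  (\int[P]_z (L z.2 (f z.1))%:E)%E.

Definition Dist (f1 f2 : X -> 'rV[R]_d) : \bar R :=
  (\int[P]_z (sqnorm (f1 z.1 - f2 z.1))%:E)%E.

(* R(G) = min_{f in V(G)} R(f)  (as an infimum; minimizers are assumed to exist) *)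
Definition minRisk (t : nat) (G : 'I_t -> X -> 'rV[R]_d) : \bar R :=
  ereal_inf [set Risk f | f in Vspan G].
End Risk.

Definition mutually_independent {dO dT : measure_display} {O : measurableType dO}
    {T : measurableType dT} (Pr : probability O R) (xi : nat -> O -> T) :=
  forall (I : seq nat) (A : nat -> set T), uniq I ->
    (forall i, measurable (A i)) ->
    Pr (\bigcap_(i in [set` I]) (xi i @^-1` A i)) = (\prod_(i <- I) Pr (xi i @^-1` A i))%E.

Definition iid {dO dT : measure_display} {O : measurableType dO}
    {T : measurableType dT} (Pr : probability O R) (Q : probability T R) (xi : nat -> O -> T) :=
  [/\ forall i, measurable_fun setT (xi i),
      forall i A, measurable A -> Pr (xi i @^-1` A) = Q A
    & mutually_independent Pr xi].

(* \bar R_t = E[ R({g_1,...,g_t}) ] where g_i = gfun (xi i) and xi_0, xi_1, ... are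
   i.i.d. with law Q on the probability space (O, Pr) *)
Definition avgMinRisk {dX dY dO dT : measure_display} {X : measurableType dX}
    {Y : measurableType dY} {O : measurableType dO} {T : measurableType dT}
    (P : probability (X * Y)%type R) {d : nat} (L : Y -> 'rV[R]_d -> R)
    (gfun : T -> X -> 'rV[R]_d) (Pr : probability O R) (xi : nat -> O -> T) (t : nat) : \bar R :=
  (\int[Pr]_w minRisk P L (fun i : 'I_t => gfun (xi i w)))%E.

End Defs.

From HB Require Import structures.
From mathcomp Require Import all_boot all_order all_algebra.
From mathcomp Require Import all_classical all_reals all_analysis.
From mathcomp Require Import measurable_realfun.
From mathcomp Require Import ring lra.
Import Order.TTheory GRing.Theory Num.Theory.
Import numFieldNormedType.Exports.
Local Open Scope classical_set_scope.
Local Open Scope ring_scope.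

(* For a fixed draw, f1 in V(G) and f2 in V(G') both lie in V(G u G'), whose risk
   minimizer f3 has risk R(G u G').  Strong convexity of L makes the risk strongly
   convex along segments of that subspace, so comparing R(f3) with the risk at
   f3 + t (f - f3) and letting t -> 0 gives the quadratic growth bound
   (mu/2) D(f, f3) <= R(f) - R(f3).  Together with D(f1, f2) <= 2 D(f1, f3) + 2 D(f2, f3)
   this gives D(f1, f2) <= (4/mu) (R(G) + R(G') - 2 R(G u G')).  In expectation, R(G)
   and R(G') both have mean bar R_k, because the blocks (g_1..g_k) and (g'_1..g'_k) of
   an i.i.d. sequence have the same law, while R(G u G') has mean bar R_2k. *)

Section sqnorm.
Context {R : realType} {d : nat}.
Implicit Types (a b c v : 'rV[R]_d).

Lemma sqnorm_ge0 v : 0 <= sqnorm v.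
Proof. by apply: sumr_ge0 => i _; exact: sqr_ge0. Qed.

Lemma sqnormZ (r : R) v : sqnorm (r *: v) = r ^+ 2 * sqnorm v.
Proof. by rewrite /sqnorm mulr_sumr; apply: eq_bigr => i _; rewrite mxE exprMn. Qed.

Lemma sqnormB_le a b c : sqnorm (a - b) <= 2 * sqnorm (a - c) + 2 * sqnorm (b - c).
Proof.
rewrite /sqnorm !mulr_sumr -big_split /=; apply: ler_sum => i _; rewrite !mxE.
have := sqr_ge0 (a 0 i + b 0 i - 2 * c 0 i); rewrite !expr2 => ?; nra.
Qed.

End sqnorm.

Section strong_convexity.
Context {R : realType} {Y : Type} {d : nat} {mu : R} {L : Y -> 'rV[R]_d -> R}.
Hypothesis scL : strongly_convex mu L.

(* Apply the defining inequality at both endpoints, based at the intermediate point;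
   the two gradient terms cancel in the convex combination. *)
Lemma strongly_convex_segment y a b (t : R) : 0 <= t <= 1 ->
  mu / 2 * (t * (1 - t)) * sqnorm (a - b)
    <= t * L y a + (1 - t) * L y b - L y (b + t *: (a - b)).
Proof.
move=> /andP[t0 t1]; set z := b + t *: (a - b).
have za : a - z = (1 - t) *: (a - b).
  by apply/rowP => i; rewrite !mxE; ring.
have zb : b - z = - t *: (a - b).
  by apply/rowP => i; rewrite !mxE; ring.
have := scL y a z; have := scL y b z.
rewrite za zb !linearZ !sqnormZ /=; set D := 'd (L y) z (a - b) => hb ha.
have t0' : 0 <= 1 - t by lra.
have := lerD (ler_wpM2l t0 ha) (ler_wpM2l t0' hb).
set s := sqnorm (a - b); set Lz := L y z; set La := L y a; set Lb := L y b.
have -> : t * (Lz + (1 - t) * D + mu / 2 * ((1 - t) ^+ 2 * s)) +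
          (1 - t) * (Lz + - t * D + mu / 2 * ((- t) ^+ 2 * s))
        = Lz + mu / 2 * (t * (1 - t)) * s by ring.
lra.
Qed.

End strong_convexity.

Section Vspan.
Context {R : realType} {X : Type} {d t : nat} {G : 'I_t -> X -> 'rV[R]_d}.

Lemma Vspan_segment f g (s : R) :
  Vspan G f -> Vspan G g -> Vspan G (fun x => g x + s *: (f x - g x)).
Proof.
move=> [cf ->] [cg ->]; exists (fun i => cg i + s * (cf i - cg i)).
apply: funext => x; rewrite scalerBr !scaler_sumr -sumrB -big_split /=.
by apply: eq_bigr => i _; rewrite !scalerA scalerDl mulrBr scalerBl.
Qed.

Lemma Vspan_comp {n} (h : 'I_n -> 'I_t) {f} :
  Vspan (fun i => G (h i)) f -> Vspan G f.
Proof.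
move=> [c ->]; exists (fun j => \sum_(i | h i == j) c i); apply: funext => x.
rewrite (partition_big h predT) //=; apply: eq_bigr => j _.
by rewrite scaler_suml; apply: eq_bigr => i /eqP <-.
Qed.

End Vspan.

Section measurable_Vspan.
Context {R : realType} {dX : measure_display} {X : measurableType dX} {d t : nat}.
Context {G : 'I_t -> X -> 'rV[R]_d}.
Hypothesis mG : forall i j, measurable_fun setT (fun x => G i x 0 j).

Lemma measurable_Vspan {f} : Vspan G f -> forall j, measurable_fun setT (fun x => f x 0 j).
Proof.
move=> [c ->] j; under eq_fun do rewrite summxE.
apply: measurable_sum => i; under eq_fun do rewrite mxE.
exact: measurable_funM.
Qed.

Lemma measurable_sqnormB {f g} : Vspan G f -> Vspan G g ->
  measurable_fun setT (fun x => sqnorm (f x - g x)).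
Proof.
move=> /measurable_Vspan mf /measurable_Vspan mg; rewrite /sqnorm.
apply: measurable_sum => j; under eq_fun do rewrite !mxE.
by apply: measurable_funX; apply: measurable_funB.
Qed.

End measurable_Vspan.

Section quadratic_growth.
Context {R : realType} {dX dY : measure_display} {X : measurableType dX} {Y : measurableType dY}.
Variable P : probability (X * Y)%type R.
Context {d t : nat} {L : Y -> 'rV[R]_d -> R} {mu : R}.
Hypotheses (mu_gt0 : 0 < mu) (scL : strongly_convex mu L).
Context {G : 'I_t -> X -> 'rV[R]_d}.
Hypothesis mG : forall i j, measurable_fun setT (fun x => G i x 0 j).
Hypothesis intG : forall f, Vspan G f -> P.-integrable setT (fun z => (L z.2 (f z.1))%:E).

Implicit Types f g : X -> 'rV[R]_d.

Lemma Risk_fin_num {f} : Vspan G f -> Risk P L f \is a fin_num.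
Proof. by move=> /intG; exact: integrable_fin_num. Qed.

Lemma measurable_loss {f} : Vspan G f -> measurable_fun setT (fun w : X * Y => L w.2 (f w.1)).
Proof. by move=> /intG /measurable_int /measurable_EFinP. Qed.

Lemma Dist_ge0 f g : (0 <= Dist P f g)%E.
Proof. by apply: integral_ge0 => z _; rewrite lee_fin sqnorm_ge0. Qed.

Lemma measurable_sqnormB_fst {f g} : Vspan G f -> Vspan G g ->
  measurable_fun setT (fun z : X * Y => (sqnorm (f z.1 - g z.1))%:E).
Proof.
move=> Vf Vg; apply/measurable_EFinP.
exact: measurableT_comp (measurable_sqnormB mG Vf Vg) measurable_fst.
Qed.

Lemma Dist_triangle {f1 f2 f3} : Vspan G f1 -> Vspan G f2 -> Vspan G f3 ->
  (Dist P f1 f2 <= 2%:E * Dist P f1 f3 + 2%:E * Dist P f2 f3)%E.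
Proof.
move=> V1 V2 V3; rewrite /Dist -!ge0_integralZl_EFin //; first last.
- exact: measurable_sqnormB_fst.
- by move=> z _; rewrite lee_fin sqnorm_ge0.
- exact: measurable_sqnormB_fst.
- by move=> z _; rewrite lee_fin sqnorm_ge0.
rewrite -ge0_integralD //; first last.
- by apply: measurable_funeM; exact: measurable_sqnormB_fst.
- by move=> z _; rewrite mule_ge0 // lee_fin sqnorm_ge0.
- by apply: measurable_funeM; exact: measurable_sqnormB_fst.
- by move=> z _; rewrite mule_ge0 // lee_fin sqnorm_ge0.
apply: ge0_le_integral => //.
- by move=> z _; rewrite lee_fin sqnorm_ge0.
- exact: measurable_sqnormB_fst.
- by apply: emeasurable_funD; apply: measurable_funeM; exact: measurable_sqnormB_fst.
- by move=> z _; rewrite -!EFinM -EFinD lee_fin sqnormB_le.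
Qed.

(* With z = f3 + s (f - f3) in V(G), integrating the segment inequality and using
   R(f3) <= R(z) gives s r (mu/2) D(f, f3) <= s (R(f) - R(f3)) for r = 1 - s in (0,1). *)
Lemma Dist_le_excess_Risk {f f3} : Vspan G f -> Vspan G f3 ->
    (forall g, Vspan G g -> Risk P L f3 <= Risk P L g)%E ->
  (Dist P f f3 <= (2 / mu)%:E * (Risk P L f - Risk P L f3))%E.
Proof.
move=> Vf V3 f3_min.
have gap_bound : ((mu / 2)%:E * Dist P f f3 <= Risk P L f - Risk P L f3)%E.
  apply/lee_mul01Pr; first by rewrite mule_ge0 ?Dist_ge0 // lee_fin divr_ge0 // ltW.
  move=> r /andP[r_gt0 r_lt1]; set s := 1 - r.
  have s01 : 0 <= s <= 1 by apply/andP; split; rewrite /s; lra.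
  have sr : 1 - s = r by rewrite /s; ring.
  pose z x := f3 x + s *: (f x - f3 x).
  have Vz : Vspan G z by exact: Vspan_segment.
  pose gap (w : X * Y) := s * L w.2 (f w.1) + r * L w.2 (f3 w.1) - L w.2 (z w.1).
  have int_gap : (\int[P]_w (gap w)%:E =
      s%:E * Risk P L f + r%:E * Risk P L f3 - Risk P L z)%E.
    have := intG _ Vf; have := intG _ V3; have := intG _ Vz => Iz I3 If.
    under eq_integral do rewrite /gap EFinB EFinD !EFinM.
    rewrite integralB //; last by apply: integrableD => //; exact: integrableZl.
    by rewrite integralD // ?integralZl //; exact: integrableZl.
  have sqnorm_le_gap w : mu / 2 * (s * r) * sqnorm (f w.1 - f3 w.1) <= gap w.
    by have := strongly_convex_segment scL w.2 (f w.1) (f3 w.1) s s01; rewrite sr.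
  have c_ge0 : 0 <= mu / 2 * (s * r).
    by rewrite !mulr_ge0 ?invr_ge0 ?ltW //; lra.
  have : ((mu / 2 * (s * r))%:E * Dist P f f3 <= \int[P]_w (gap w)%:E)%E.
    rewrite /Dist -ge0_integralZl_EFin //; last 2 first.
    - by move=> w _; rewrite lee_fin sqnorm_ge0.
    - exact: measurable_sqnormB_fst.
    apply: ge0_le_integral => //.
    - by move=> w _; rewrite -EFinM lee_fin mulr_ge0 ?sqnorm_ge0.
    - by apply: measurable_funeM; exact: measurable_sqnormB_fst.
    - apply/measurable_EFinP/measurable_funB; last exact: measurable_loss.
      by apply: measurable_funD; apply: measurable_funM => //; exact: measurable_loss.
    - by move=> w _; rewrite -EFinM lee_fin.
  rewrite int_gap.
  have := f3_min _ Vz.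
  rewrite -(fineK (Risk_fin_num Vf)) -(fineK (Risk_fin_num V3)) -(fineK (Risk_fin_num Vz)).
  rewrite lee_fin -!EFinM -EFinD -!EFinB => f3_le_z excess.
  have : ((mu / 2 * (s * r))%:E * Dist P f f3 <=
           (s * (fine (Risk P L f) - fine (Risk P L f3)))%:E)%E.
    by apply: le_trans excess _; rewrite lee_fin /s; lra.
  rewrite (_ : mu / 2 * (s * r) = s * (r * (mu / 2))); last by ring.
  by rewrite !EFinM -!muleA lee_pmul2l // lte_fin /s; lra.
have mu_halfK : 2 / mu * (mu / 2) = 1 by field; rewrite gt_eqF.
apply: le_trans (lee_wpmul2l _ gap_bound); last by rewrite lee_fin divr_ge0 // ltW.
by rewrite muleA -EFinM mu_halfK mul1e.
Qed.

Lemma Dist_le_excess_Risk_sub {n1 n2} (h1 : 'I_n1 -> 'I_t) (h2 : 'I_n2 -> 'I_t) {f1 f2 f3} :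
    Vspan (fun i => G (h1 i)) f1 -> Vspan (fun i => G (h2 i)) f2 -> Vspan G f3 ->
    Risk P L f3 = minRisk P L G ->
  (Dist P f1 f2 <= (4 / mu)%:E *
     ((Risk P L f1 - Risk P L f3) + (Risk P L f2 - Risk P L f3)))%E.
Proof.
move=> /(Vspan_comp h1) V1 /(Vspan_comp h2) V2 V3 f3_min.
have {}f3_min g : Vspan G g -> (Risk P L f3 <= Risk P L g)%E.
  by move=> Vg; rewrite f3_min; apply: ereal_inf_lbound; exists g.
have two_ge0 : (0 <= 2%:E :> \bar R)%E by rewrite lee_fin.
apply: le_trans (Dist_triangle V1 V2 V3) _.
apply: le_trans (leeD (lee_wpmul2l two_ge0 (Dist_le_excess_Risk V1 V3 f3_min))
                      (lee_wpmul2l two_ge0 (Dist_le_excess_Risk V2 V3 f3_min))) _.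
rewrite -(fineK (Risk_fin_num V1)) -(fineK (Risk_fin_num V2)) -(fineK (Risk_fin_num V3)).
by rewrite -!EFinB -!EFinM -!EFinD lee_fin; lra.
Qed.

End quadratic_growth.

Section integral_comparison.
Context {R : realType}.
Local Open Scope ereal_scope.

Lemma eq_law_integral {dO dZ : measure_display} {O : measurableType dO}
    {Z : measurableType dZ} (mu : {measure set O -> \bar R}) {phi1 phi2 : O -> Z}
    {F : Z -> \bar R} :
  measurable_fun setT phi1 -> measurable_fun setT phi2 ->
  (forall A, measurable A -> mu (phi1 @^-1` A) = mu (phi2 @^-1` A)) ->
  measurable_fun setT F -> mu.-integrable setT (fun w => F (phi1 w)) ->
  mu.-integrable setT (fun w => F (phi2 w)) /\
  \int[mu]_w F (phi1 w) = \int[mu]_w F (phi2 w).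
Proof.
move=> m1 m2 law12 mF int1.
have push12 A : measurable A -> A `<=` setT ->
    pushforward mu phi1 A = pushforward mu phi2 A.
  by move=> mA _; exact: law12.
have int2 : mu.-integrable setT (fun w => F (phi2 w)).
  apply/integrableP; split; first exact: measurableT_comp.
  have mabsF := measurableT_comp (@abse_measurable R setT) mF.
  have := ge0_integral_pushforward m2 mu measurableT mabsF (fun _ _ => abse_ge0 _).
  rewrite preimage_setT => <-; rewrite -(eq_measure_integral _ push12) //.
  rewrite ge0_integral_pushforward // ?preimage_setT; last by move=> ? _; exact: abse_ge0.
  by case/integrableP: int1.
split => //.
have e1 := integral_pushforward (mu := mu) (D := setT) m1 mF.
have e2 := integral_pushforward (mu := mu) (D := setT) m2 mF.
rewrite preimage_setT in e1 e2.
apply: etrans (etrans (esym (e1 int1 measurableT)) _) (e2 int2 measurableT).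
exact: eq_measure_integral.
Qed.

(* The integral of a nonnegative function is the supremum of the integrals of the
   simple functions below it, so it is monotone even for non-measurable functions. *)
Lemma ge0_le_integral_nonmeas {dT : measure_display} {T : measurableType dT}
    (mu : {measure set T -> \bar R}) {f g : T -> \bar R} :
  (forall x, 0 <= f x) -> (forall x, f x <= g x) -> \int[mu]_x f x <= \int[mu]_x g x.
Proof.
move=> f0 fg; rewrite !ge0_integralTE //; last by move=> x; exact: le_trans (fg x).
by apply: le_ereal_sup => _ [h hf <-]; exists h => //= x; exact: le_trans (fg x).
Qed.

End integral_comparison.

Section boxes.
Context {dT : measure_display} {T : measurableType dT} (k : nat).

Definition box (B : 'I_k -> set T) : set (k.-tuple T) := [set x | forall i, B i (tnth x i)].

Definition boxes : set (set (k.-tuple T)) :=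
  [set box B | B in [set B | forall i, measurable (B i)]].

Lemma measurable_box B : (forall i, measurable (B i)) -> measurable (box B).
Proof.
move=> mB; have -> : box B = \bigcap_(i in [set: 'I_k]) (@tnth k T ^~ i @^-1` B i).
  by apply/seteqP; split => x /= h i; [move=> _; apply: h | apply: h].
apply: fin_bigcap_measurable; first exact: finite_finset.
by move=> i _; rewrite -[X in measurable X]setTI; exact: measurable_tnth.
Qed.

Lemma measurable_boxes : measurable = <<s boxes >>.
Proof.
apply/seteqP; split; last first.
  apply: smallest_sub; first exact: sigma_algebra_measurable.
  by move=> _ [B mB <-]; exact: measurable_box.
change (g_sigma_preimage (fun i (x : k.-tuple T) => tnth x i) `<=` <<s boxes >>).
apply: smallest_sub; first exact: smallest_sigma_algebra.
apply: (big_ind (fun S => S `<=` <<s boxes >>)) => //.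
  by move=> A B hA hB C [/hA|/hB].
move=> i _ _ [C mC <-]; apply: sub_sigma_algebra.
exists (fun j => if j == i then C else setT); first by move=> j; case: ifP.
apply/seteqP; split => x /=.
- by move=> h; split => //; have := h i; rewrite eqxx.
- by move=> [_ h] j; case: eqP => // ->.
Qed.

End boxes.

Definition block {O T : Type} (xi : nat -> O -> T) (k s : nat) (w : O) : k.-tuple T :=
  [tuple xi (s + i)%N w | i < k].

Section iid_blocks.
Context {R : realType} {dO dT : measure_display} {O : measurableType dO} {T : measurableType dT}.
Context {Pr : probability O R} {Q : probability T R} {xi : nat -> O -> T}.
Hypothesis xi_iid : iid Pr Q xi.
Variable k : nat.

Lemma measurable_block s : measurable_fun setT (block xi k s).
Proof.
apply/measurable_fun_tnthP => i.
have -> : (@tnth k T ^~ i \o block xi k s) = xi (s + i)%N.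
  by apply: funext => w; rewrite /= tnth_mktuple.
by case: xi_iid.
Qed.

Lemma block_box s B : (forall i, measurable (B i)) ->
  Pr (block xi k s @^-1` box k B) = (\prod_(i < k) Q (B i))%E.
Proof.
move=> mB; case: xi_iid => _ law_xi indep_xi.
pose A j := if (s <= j)%N then oapp B setT (insub (j - s)%N : option 'I_k) else setT.
have mA j : measurable (A j) by rewrite /A; case: ifP => // _; case: insubP => //=.
have As (i : 'I_k) : A (s + i)%N = B i by rewrite /A leq_addr addKn valK.
have -> : block xi k s @^-1` box k B = \bigcap_(j in [set` iota s k]) (xi j @^-1` A j).
  apply/seteqP; split => w /=.
  - move=> hw j /=; rewrite mem_iota => /andP[sj _]; rewrite /A sj.
    by case: insubP => //= i _ ij; have := hw i; rewrite tnth_mktuple ij subnKC.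
  - move=> hw i; rewrite tnth_mktuple -As; apply: hw => /=.
    by rewrite mem_iota leq_addr ltn_add2l ltn_ord.
rewrite indep_xi ?iota_uniq // -(addn0 s) iotaDl big_map.
rewrite (_ : iota 0 k = index_iota 0 k) ?big_mkord; last by rewrite /index_iota subn0.
by apply: eq_bigr => i _; rewrite law_xi // As.
Qed.

(* Both laws agree with the product of the Q (B i) on the pi-system of boxes. *)
Lemma block_shift s1 s2 A : measurable A ->
  Pr (block xi k s1 @^-1` A) = Pr (block xi k s2 @^-1` A).
Proof.
move=> mA; have := measurable_block s1; have := measurable_block s2 => m2 m1.
apply: (measure_unique (boxes k) (fun _ => setT) (measurable_boxes k) _ _ _
  (pushforward Pr (block xi k s1)) (pushforward Pr (block xi k s2))) => //.
- move=> _ _ [B1 mB1 <-] [B2 mB2 <-]; exists (fun i => B1 i `&` B2 i).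
    by move=> i; exact: measurableI.
  by apply/seteqP; split => x /=; [move=> h; split => i; case: (h i) | move=> [h1 h2] i; split].
- by move=> _; exists (fun _ => setT) => //; apply/seteqP; split.
- by rewrite bigcup_const.
- move=> _ [B mB <-].
  change (Pr (block xi k s1 @^-1` box k B) = Pr (block xi k s2 @^-1` box k B)).
  by rewrite !block_box.
- move=> _; change (Pr (block xi k s1 @^-1` setT) < +oo)%E.
  by rewrite preimage_setT probability_setT ltry.
Qed.

Lemma integral_block_shift s1 s2 {F : k.-tuple T -> \bar R} : measurable_fun setT F ->
    Pr.-integrable setT (fun w => F (block xi k s1 w)) ->
  Pr.-integrable setT (fun w => F (block xi k s2 w)) /\
  (\int[Pr]_w F (block xi k s1 w) = \int[Pr]_w F (block xi k s2 w))%E.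
Proof. exact: eq_law_integral (measurable_block s1) (measurable_block s2) (block_shift s1 s2). Qed.

End iid_blocks.


Theorem theorem5 (R : realType)
    (dX dY : measure_display) (X : measurableType dX) (Y : measurableType dY)
    (P : probability (X * Y)%type R)
    (d : nat) (L : Y -> 'rV[R]_d -> R) (mu : R)
    (dT : measure_display) (T : measurableType dT) (gfun : T -> X -> 'rV[R]_d)
    (Q : probability T R)
    (dO : measure_display) (O : measurableType dO) (Pr : probability O R)
    (xi : nat -> O -> T)
    (argmin : forall t : nat, ('I_t -> T) -> X -> 'rV[R]_d)
    (k : nat) :
  (* L is continuously differentiable in its second argument *)
  (forall (y : Y) (p : 'rV[R]_d), differentiable (L y) p) ->
  (forall (y : Y) (h : 'rV[R]_d), continuous (fun p => 'd (L y) p h)) ->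
  (* L is mu-strongly convex, mu > 0 *)
  0 < mu -> strongly_convex mu L ->
  (* regularity: the functions g are measurable, and R(f) is a well-defined
     (finite) expectation for every f in a Vspan V(G) *)
  (forall (tau : T) (i : 'I_d), measurable_fun setT (fun x => gfun tau x 0 i)) ->
  (forall (t : nat) (G : 'I_t -> T) (f : X -> 'rV[R]_d),
      Vspan (fun i => gfun (G i)) f ->
      P.-integrable setT (fun z => (L z.2 (f z.1))%:E)) ->
  (* minimizers exist: argmin t G is a minimizer of R over V(G) *)
  (forall (t : nat) (G : 'I_t -> T),
      Vspan (fun i => gfun (G i)) (argmin t G) /\
      Risk P L (argmin t G) = minRisk P L (fun i => gfun (G i))) ->
  (* G |-> R(G) is measurable, and \bar R_k, \bar R_{2k} are finite *)
  (forall t : nat, measurable_fun setT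
      (fun tau : t.-tuple T => minRisk P L (fun i => gfun (tnth tau i)))) ->
  Pr.-integrable setT (fun w => minRisk P L (fun i : 'I_k => gfun (xi i w))) ->
  Pr.-integrable setT (fun w => minRisk P L (fun i : 'I_(k + k) => gfun (xi i w))) ->
  (* sampling: xi_0, xi_1, ... i.i.d. with law Q; G = (g_1..g_k) = (xi_0..xi_{k-1}),
     G' = (g'_1..g'_k) = (xi_k..xi_{2k-1}) *)
  iid Pr Q xi ->
  (1 <= k)%N ->
  (\int[Pr]_w Dist P (argmin k (fun i => xi i w)) (argmin k (fun i => xi (k + i)%N w))
     <= (8 / mu)%:E * (avgMinRisk P L gfun Pr xi k - avgMinRisk P L gfun Pr xi (k + k)))%E.
Proof.
move=> _ _ mu_gt0 scL mg intL hmin hmeas int_Rk int_R2k xi_iid _.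
pose R1 w := minRisk P L (fun i : 'I_k => gfun (xi i w)).
pose R2 w := minRisk P L (fun i : 'I_k => gfun (xi (k + i)%N w)).
pose R3 w := minRisk P L (fun i : 'I_(k + k)%N => gfun (xi i w)).
have Dist_le w : (Dist P (argmin k (fun i => xi i w)) (argmin k (fun i => xi (k + i)%N w))
    <= (4 / mu)%:E * ((R1 w - R3 w) + (R2 w - R3 w)))%E.
  rewrite /R1 /R2 /R3.
  have [V1 <-] := hmin k (fun i => xi i w).
  have [V2 <-] := hmin k (fun i => xi (k + i)%N w).
  have [V3 e3] := hmin (k + k)%N (fun i => xi i w).
  rewrite -e3; exact: (Dist_le_excess_Risk_sub (G := fun j : 'I_(k + k) => gfun (xi j w))
    P mu_gt0 scL (fun _ => mg _) (fun f => intL _ _ f) (lshift k) (@rshift k k) V1 V2 V3 e3).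
have [int_R2 E_R12] : Pr.-integrable setT R2 /\ (\int[Pr]_w R1 w = \int[Pr]_w R2 w)%E.
  have minRisk_block s : (fun w => minRisk P L (fun i => gfun (tnth (block xi k s w) i))) =
      (fun w => minRisk P L (fun i : 'I_k => gfun (xi (s + i)%N w))).
    by apply: funext => w; congr (minRisk P L _); apply: funext => i; rewrite tnth_mktuple.
  by have := integral_block_shift xi_iid k 0 k (hmeas k); rewrite !minRisk_block; apply.
apply: le_trans (ge0_le_integral_nonmeas Pr (fun w => Dist_ge0 P _ _) Dist_le) _.
have int_R13 := integrableB measurableT int_Rk int_R2k.
have int_R23 := integrableB measurableT int_R2 int_R2k.
rewrite integralZl //; last exact: integrableD.
rewrite integralD // !integralB // -E_R12.
have := integrable_fin_num measurableT int_Rk; have := integrable_fin_num measurableT int_R2k.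
rewrite /avgMinRisk => /fineK <- /fineK <-.
by rewrite -!EFinB -!EFinD -!EFinM lee_fin; lra.
Qed.
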